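(* Let f1 and f2 be two point agents in the plane, each moving with a constant nonzero velocity, such that their straight-line trajectories are not parallel and hence intersect in a single point $P$. Let $t_1$ and $t_2$ be the times at which f1 and f2 respectively pass through $P$, and suppose $t_1>t_2$ (f1 reaches the intersection after f2). Then: (i) as observed by f1, agent f2 is in regressive motion at all times $t<t_2$ and in progressive motion at all times $t>t_2$; (ii) as observed by f2, agent f1 is in progressive motion at all times $t<t_1$ and in regressive motion at all times $t>t_1$.
   Context: Each agent is a point (center of projection) with a heading equal to the direction of its velocity. For an observer agent A and an observed agent B, let $\phi_{BA}(t)\in[-\pi,\pi)$ be the azimuthal position of B as seen from A, measured relative to A's heading: $\phi=0$ is straight ahead of A, positive angles are to A's left (counterclockwise) and negative angles to A's right. Let $\dot\phi_{BA}$ be its time derivative. B is said to be in regressive motion with respect to A at time $t$ if $\dot\phi_{BA}(t)\cdot\phi_{BA}(t)\le 0$, and in progressive motion otherwise. *)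

From Stdlib Require Import Reals Lra.
Open Scope R_scope.

Definition vec := (R * R)%type.
Definition vadd (a b : vec) : vec := (fst a + fst b, snd a + snd b).
Definition vsub (a b : vec) : vec := (fst a - fst b, snd a - snd b).
Definition vscale (k : R) (a : vec) : vec := (k * fst a, k * snd a).
Definition dot (a b : vec) : R := fst a * fst b + snd a * snd b.
Definition cross (a b : vec) : R := fst a * snd b - snd a * fst b.

(* Two-argument arctangent with values in [-PI, PI):
   the polar angle of the nonzero vector (x, y); on the negative x-axis the
   value is -PI (so that the range is [-PI, PI)). Value 0 at the origin
   (irrelevant: never used at the origin). *)
Definition atan2 (y x : R) : R :=
  if Rlt_dec 0 x then atan (y / x)
  else if Rlt_dec x 0 then
    (if Rlt_dec 0 y then atan (y / x) + PI else atan (y / x) - PI)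
  else if Rlt_dec 0 y then PI / 2
  else if Rlt_dec y 0 then - (PI / 2)
  else 0.

Definition traj (a v : vec) (t : R) : vec := vadd a (vscale t v).

(* Azimuth phi_{BA}(t) in [-PI,PI) of agent B (a_B, v_B) as seen from agent A
   (a_A, v_A), relative to A's heading (the direction of v_A); positive =
   counterclockwise (to A's left).  The relative position d = p_B - p_A,
   expressed in A's frame (first axis along v_A, second axis v_A rotated by
   +90 degrees), has coordinates (dot v_A d, cross v_A d) up to the positive
   factor |v_A|. *)
Definition azimuth (aA vA aB vB : vec) (t : R) : R :=
  let d := vsub (traj aB vB t) (traj aA vA t) in
  atan2 (cross vA d) (dot vA d).

Definition regressive (aA vA aB vB : vec) (t : R) : Prop :=
  exists l, derivable_pt_lim (azimuth aA vA aB vB) t l /\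
            l * azimuth aA vA aB vB t <= 0.
Definition progressive (aA vA aB vB : vec) (t : R) : Prop :=
  exists l, derivable_pt_lim (azimuth aA vA aB vB) t l /\
            l * azimuth aA vA aB vB t > 0.

From Stdlib Require Import Reals Lra.
From Coquelicot Require Import Coquelicot.
Open Scope R_scope.

(* Write d(t) for the position of B relative to A and (X, Y) = (vA . d, vA x d)
   for its coordinates in A's frame, so that phi = atan2 Y X.  Away from Y = 0,
   phi' = (X Y' - Y X') / (X^2 + Y^2) = |vA|^2 (d x d') / (X^2 + Y^2), and phi
   has the sign of Y; hence B is regressive or progressive according to the sign
   of (vA x d)(d x d').  When A and B pass through the same point at times tA
   and tB, d(t) = (t - tB) vB - (t - tA) vA and that product equals
   (vA x vB)^2 (tA - tB)(t - tB), which changes sign exactly at t = tB. *)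

Lemma atan2_pos y x : 0 < y -> atan2 y x = PI / 2 - atan (x / y).
Proof.
  intros Hy. unfold atan2.
  destruct (Rlt_dec 0 x) as [Hx|Hx].
  { replace (y / x) with (/ (x / y)) by (field; lra).
    apply atan_inv. apply Rdiv_lt_0_compat; lra. }
  destruct (Rlt_dec x 0) as [Hx'|Hx'].
  { destruct (Rlt_dec 0 y); [|lra].
    replace (y / x) with (- / (- x / y)) by (field; lra).
    rewrite atan_opp, atan_inv by (apply Rdiv_lt_0_compat; lra).
    replace (- x / y) with (- (x / y)) by (field; lra). rewrite atan_opp. lra. }
  replace x with 0 by lra. destruct (Rlt_dec 0 y); [|lra].
  replace (0 / y) with 0 by (field; lra). rewrite atan_0. lra.
Qed.

Lemma atan2_neg y x : y < 0 -> atan2 y x = - (PI / 2) - atan (x / y).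
Proof.
  intros Hy. unfold atan2.
  destruct (Rlt_dec 0 x) as [Hx|Hx].
  { replace (y / x) with (- / (- (x / y))) by (field; lra).
    rewrite atan_opp, atan_inv, atan_opp; [lra|].
    replace (- (x / y)) with (x / - y) by (field; lra).
    apply Rdiv_lt_0_compat; lra. }
  destruct (Rlt_dec x 0) as [Hx'|Hx'].
  { destruct (Rlt_dec 0 y); [lra|].
    replace (y / x) with (/ (x / y)) by (field; lra).
    rewrite atan_inv; [lra|].
    replace (x / y) with (- x / - y) by (field; lra).
    apply Rdiv_lt_0_compat; lra. }
  replace x with 0 by lra. destruct (Rlt_dec 0 y); [lra|].
  destruct (Rlt_dec y 0); [|lra].
  replace (0 / y) with 0 by (field; lra). rewrite atan_0. lra.
Qed.

Lemma atan2_same_sign a y x : 0 < a * y -> 0 < a * atan2 y x.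
Proof.
  intros Hay. pose proof (atan_bound (x / y)) as Hb.
  destruct (Rtotal_order y 0) as [Hy | [Hy | Hy]].
  - rewrite atan2_neg by exact Hy.
    assert (a < 0) by nra. nra.
  - subst y. lra.
  - rewrite atan2_pos by exact Hy.
    assert (0 < a) by nra. nra.
Qed.

Lemma atan2_locally_shifted_atan (x y : R -> R) t :
  continuous y t -> y t <> 0 ->
  exists c, locally t (fun s => c - atan (x s / y s) = atan2 (y s) (x s)).
Proof.
  intros Hy Hy0.
  destruct (Rdichotomy _ _ Hy0) as [Hneg | Hpos].
  - exists (- (PI / 2)).
    apply (filter_imp (fun s => y s < 0)); [intros s Hs; now rewrite atan2_neg|].
    exact (Hy _ (open_lt 0 (y t) Hneg)).
  - exists (PI / 2).
    apply (filter_imp (fun s => 0 < y s)); [intros s Hs; now rewrite atan2_pos|].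
    exact (Hy _ (open_gt 0 (y t) Hpos)).
Qed.

Lemma is_derive_atan2 (x y : R -> R) (t x' y' : R) :
  is_derive x t x' -> is_derive y t y' -> y t <> 0 ->
  is_derive (fun s => atan2 (y s) (x s)) t
    ((x t * y' - y t * x') / (x t ^ 2 + y t ^ 2)).
Proof.
  intros Hx Hy Hy0.
  destruct (atan2_locally_shifted_atan x y t) as [c Hc]; [|exact Hy0|].
  { apply (ex_derive_continuous (V := R_NormedModule)). now exists y'. }
  apply (is_derive_ext_loc _ _ _ _ Hc).
  evar (l : R). replace (_ / _) with l.
  - apply (is_derive_minus (fun _ => c)); [apply is_derive_const|].
    apply (is_derive_comp atan); [apply is_derive_Reals, derivable_pt_lim_atan|].
    apply is_derive_div; [exact Hx | exact Hy | exact Hy0].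
  - unfold l, minus, plus, opp, zero, scal; simpl; unfold mult; simpl.
    assert (0 < y t * y t) by (apply Rsqr_pos_lt; exact Hy0).
    field. split; [nra | exact Hy0].
Qed.

Lemma frame_identity (a d w : vec) :
  dot a d * cross a w - cross a d * dot a w = dot a a * cross d w.
Proof. unfold dot, cross. ring. Qed.

Lemma dot_self_pos (v : vec) : v <> (0, 0) -> 0 < dot v v.
Proof.
  destruct v as [v1 v2]. unfold dot; simpl. intros Hv.
  destruct (Req_dec v1 0); destruct (Req_dec v2 0); subst; try nra.
  now contradiction Hv.
Qed.

Definition relpos (aA vA aB vB : vec) (t : R) : vec :=
  vsub (traj aB vB t) (traj aA vA t).

Lemma dot_relpos u aA vA aB vB s :
  dot u (relpos aA vA aB vB s) = dot u (vsub aB aA) + s * dot u (vsub vB vA).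
Proof. unfold dot, relpos, traj, vsub, vadd, vscale; simpl. ring. Qed.

Lemma cross_relpos u aA vA aB vB s :
  cross u (relpos aA vA aB vB s) = cross u (vsub aB aA) + s * cross u (vsub vB vA).
Proof. unfold cross, relpos, traj, vsub, vadd, vscale; simpl. ring. Qed.

Lemma is_derive_affine (p q t : R) : is_derive (fun s => p + s * q) t q.
Proof. auto_derive; [exact I | ring]. Qed.

Lemma is_derive_azimuth aA vA aB vB t :
  let d := relpos aA vA aB vB t in
  cross vA d <> 0 ->
  is_derive (azimuth aA vA aB vB) t
    (dot vA vA * cross d (vsub vB vA) / (dot vA d ^ 2 + cross vA d ^ 2)).
Proof.
  intros d Hd. rewrite <- frame_identity.
  apply (is_derive_atan2 (fun s => dot vA (relpos aA vA aB vB s))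
                         (fun s => cross vA (relpos aA vA aB vB s))); [| |exact Hd].
  - eapply is_derive_ext; [intro s; symmetry; apply dot_relpos|].
    apply is_derive_affine.
  - eapply is_derive_ext; [intro s; symmetry; apply cross_relpos|].
    apply is_derive_affine.
Qed.

Lemma azimuth_rate_factor aA vA aB vB t :
  let d := relpos aA vA aB vB t in
  vA <> (0, 0) -> cross vA d <> 0 ->
  exists l k, derivable_pt_lim (azimuth aA vA aB vB) t l /\ 0 < k /\
    l * azimuth aA vA aB vB t = k * (cross d (vsub vB vA) * azimuth aA vA aB vB t).
Proof.
  intros d HvA Hd.
  set (X := dot vA d); set (Y := cross vA d).
  exists (dot vA vA * cross d (vsub vB vA) / (X ^ 2 + Y ^ 2)),
         (dot vA vA / (X ^ 2 + Y ^ 2)).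
  split; [apply is_derive_Reals, is_derive_azimuth, Hd|split].
  - apply Rdiv_lt_0_compat; [now apply dot_self_pos|].
    assert (0 < Y * Y) by (apply Rsqr_pos_lt; exact Hd).
    pose proof (pow2_ge_0 X). simpl. lra.
  - unfold Rdiv. ring.
Qed.

Lemma progressive_of_cross_pos aA vA aB vB t :
  let d := relpos aA vA aB vB t in
  vA <> (0, 0) -> 0 < cross vA d * cross d (vsub vB vA) ->
  progressive aA vA aB vB t.
Proof.
  intros d HvA Hpos.
  assert (Hd : cross vA d <> 0) by (intro E; rewrite E in Hpos; lra).
  destruct (azimuth_rate_factor aA vA aB vB t HvA Hd) as (l & k & Hl & Hk & E).
  fold d in E.
  exists l. split; [exact Hl|]. rewrite E.
  apply Rmult_lt_0_compat; [exact Hk|].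
  apply (atan2_same_sign _ (cross vA d) (dot vA d)). nra.
Qed.

Lemma regressive_of_cross_neg aA vA aB vB t :
  let d := relpos aA vA aB vB t in
  vA <> (0, 0) -> cross vA d * cross d (vsub vB vA) < 0 ->
  regressive aA vA aB vB t.
Proof.
  intros d HvA Hneg.
  assert (Hd : cross vA d <> 0) by (intro E; rewrite E in Hneg; lra).
  destruct (azimuth_rate_factor aA vA aB vB t HvA Hd) as (l & k & Hl & Hk & E).
  fold d in E.
  exists l. split; [exact Hl|]. rewrite E.
  assert (0 < - cross d (vsub vB vA) * azimuth aA vA aB vB t)
    by (apply (atan2_same_sign _ (cross vA d) (dot vA d)); nra).
  nra.
Qed.

Lemma relpos_collision aA vA aB vB tA tB t :
  traj aA vA tA = traj aB vB tB ->
  relpos aA vA aB vB t = vsub (vscale (t - tB) vB) (vscale (t - tA) vA).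
Proof.
  destruct aA as [a1 a2], aB as [b1 b2].
  unfold relpos, traj, vsub, vadd, vscale; simpl. intros E. injection E as E1 E2.
  f_equal; lra.
Qed.

Lemma collision_cross_product aA vA aB vB tA tB t :
  traj aA vA tA = traj aB vB tB ->
  let d := relpos aA vA aB vB t in
  cross vA d * cross d (vsub vB vA) = cross vA vB ^ 2 * ((tA - tB) * (t - tB)).
Proof.
  intros E d. unfold d. rewrite (relpos_collision _ _ _ _ _ _ t E).
  unfold cross, vsub, vscale; simpl. ring.
Qed.

Theorem theorem3 (a1 v1 a2 v2 P : vec) (t1 t2 : R) :
  v1 <> (0, 0) -> v2 <> (0, 0) ->
  cross v1 v2 <> 0 ->
  traj a1 v1 t1 = P -> traj a2 v2 t2 = P ->
  t1 > t2 ->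
  (forall t, t < t2 -> regressive a1 v1 a2 v2 t) /\
  (forall t, t > t2 -> progressive a1 v1 a2 v2 t) /\
  (forall t, t < t1 -> progressive a2 v2 a1 v1 t) /\
  (forall t, t > t1 -> regressive a2 v2 a1 v1 t).
Proof.
  intros Hv1 Hv2 Hc E1 E2 Ht.
  assert (E12 : traj a1 v1 t1 = traj a2 v2 t2) by congruence.
  assert (Hc12 : 0 < cross v1 v2 ^ 2) by (apply pow2_gt_0; exact Hc).
  assert (Hc21 : 0 < cross v2 v1 ^ 2)
    by (replace (cross v2 v1) with (- cross v1 v2) by (unfold cross; ring);
        apply pow2_gt_0; lra).
  repeat split; intros t Hlt.
  - apply regressive_of_cross_neg; [exact Hv1|].
    rewrite (collision_cross_product _ _ _ _ _ _ t E12).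
    apply Rmult_pos_neg; nra.
  - apply progressive_of_cross_pos; [exact Hv1|].
    rewrite (collision_cross_product _ _ _ _ _ _ t E12).
    apply Rmult_lt_0_compat; nra.
  - apply progressive_of_cross_pos; [exact Hv2|].
    rewrite (collision_cross_product _ _ _ _ _ _ t (eq_sym E12)).
    apply Rmult_lt_0_compat; nra.
  - apply regressive_of_cross_neg; [exact Hv2|].
    rewrite (collision_cross_product _ _ _ _ _ _ t (eq_sym E12)).
    apply Rmult_pos_neg; nra.
Qed.
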